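(* For every integer $n\geq 3$, there exists a set of $n$ points in $\mathbb{R}^{n-2}$ that is in crescent configuration.
   Context: A set of points in $\mathbb{R}^d$ is in general position if no $d+1$ of the points lie on a common (affine) hyperplane of $\mathbb{R}^d$ and no $d+2$ of the points lie on a common hypersphere of $\mathbb{R}^d$. A set of $n$ points in $\mathbb{R}^d$ is in crescent configuration if the points are in general position in $\mathbb{R}^d$, the Euclidean distances between the $\binom{n}{2}$ pairs of distinct points take exactly $n-1$ distinct values, and for every $1\le i\le n-1$ there is one of these distance values that is attained by exactly $i$ pairs of points. *)

From Stdlib Require Import Reals List Arith.
Import ListNotations.
Open Scope R_scope.

(* A point of R^d is modelled as p : nat -> R, of which only the
   coordinates k < d are meaningful.  A configuration of n points is
   P : nat -> (nat -> R), of which only the points P 0, ..., P (n-1) matter. *)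

Fixpoint sumR (d : nat) (f : nat -> R) : R :=
  match d with
  | O => 0
  | S d' => sumR d' f + f d'
  end.

Definition edist (d : nat) (x y : nat -> R) : R :=
  sqrt (sumR d (fun k => (x k - y k) ^ 2)).

Definition pt_eq (d : nat) (x y : nat -> R) : Prop :=
  forall k, (k < d)%nat -> x k = y k.

Definition distinct_pts (d n : nat) (P : nat -> nat -> R) : Prop :=
  forall i j, (i < n)%nat -> (j < n)%nat -> i <> j -> ~ pt_eq d (P i) (P j).

Definition index_subset (n m : nat) (S : list nat) : Prop :=
  NoDup S /\ length S = m /\ Forall (fun i => (i < n)%nat) S.

Definition on_common_hyperplane (d : nat) (P : nat -> nat -> R) (S : list nat) : Prop :=
  exists (a : nat -> R) (b : R),
    (exists k, (k < d)%nat /\ a k <> 0) /\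
    Forall (fun i => sumR d (fun k => a k * P i k) = b) S.

Definition on_common_hypersphere (d : nat) (P : nat -> nat -> R) (S : list nat) : Prop :=
  exists (c : nat -> R) (r : R),
    0 < r /\ Forall (fun i => edist d (P i) c = r) S.

Definition general_position (d n : nat) (P : nat -> nat -> R) : Prop :=
  distinct_pts d n P /\
  (forall S, index_subset n (d + 1) S -> ~ on_common_hyperplane d P S) /\
  (forall S, index_subset n (d + 2) S -> ~ on_common_hypersphere d P S).

(* all unordered pairs (i,j) with i < j < n *)
Definition pairs (n : nat) : list (nat * nat) :=
  flat_map (fun i => map (fun j => (i, j)) (seq (S i) (n - S i))) (seq 0 n).

Definition Reqb (x y : R) : bool := if Req_EM_T x y then true else false.

Definition mult (d n : nat) (P : nat -> nat -> R) (v : R) : nat :=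
  length (filter (fun ij => Reqb (edist d (P (fst ij)) (P (snd ij))) v) (pairs n)).

Definition is_distance (d n : nat) (P : nat -> nat -> R) (v : R) : Prop :=
  exists i j, (i < j)%nat /\ (j < n)%nat /\ edist d (P i) (P j) = v.

Definition crescent (d n : nat) (P : nat -> nat -> R) : Prop :=
  general_position d n P /\
  (exists V : list R, NoDup V /\ length V = (n - 1)%nat /\
      (forall v, In v V <-> is_distance d n P v)) /\
  (forall m, (1 <= m <= n - 1)%nat ->
      exists v, is_distance d n P v /\ mult d n P v = m).

From Stdlib Require Import Reals List Arith Lia Lra.
Import ListNotations.
Open Scope R_scope.

(* In R^m take P_0 = 0, P_(m+1) = (1, 2, ..., 2^(m-1)), and for 1 <= i <= m let
   P_i = (1, 2, ..., 2^(i-2), 2^(i-1) + sqrt N_i, 0, ..., 0), where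
   N_i = stair_sq i = 1 + 4 + ... + 4^(i-1) = |(1, ..., 2^(i-1))|^2.  Then |P_i - P_j| for
   i < j depends only on j, so the j-th distance is attained by exactly the j pairs
   below P_j, and the squared distances are distinct because N_(j+1) = 4 N_j + 1
   separates them.  The points P_1, ..., P_m form a lower triangular family and the
   differences P_(m+1) - P_i an upper triangular one, both with nonzero diagonal,
   which keeps any m+1 of the points off a hyperplane; and since P_(m+1) is
   equidistant from all the other points, a sphere through all m+2 of them would
   have to be centred at P_(m+1) itself. *)

Lemma sumR_ext d f g :
  (forall k, (k < d)%nat -> f k = g k) -> sumR d f = sumR d g.
Proof.
  induction d as [|d IH]; intros Hfg; simpl; [reflexivity|].
  rewrite IH by (intros; apply Hfg; lia). now rewrite Hfg by lia.
Qed.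

Lemma sumR_eq0 d f : (forall k, (k < d)%nat -> f k = 0) -> sumR d f = 0.
Proof.
  intros Hf. rewrite (sumR_ext d f (fun _ => 0)) by exact Hf. clear Hf.
  induction d as [|d IH]; simpl; [reflexivity|]. rewrite IH. ring.
Qed.

Lemma sumR_add d f g : sumR d (fun k => f k + g k) = sumR d f + sumR d g.
Proof. induction d as [|d IH]; simpl; [ring|]. rewrite IH. ring. Qed.

Lemma sumR_sub d f g : sumR d (fun k => f k - g k) = sumR d f - sumR d g.
Proof. induction d as [|d IH]; simpl; [ring|]. rewrite IH. ring. Qed.

Lemma sumR_scal d c f : sumR d (fun k => c * f k) = c * sumR d f.
Proof. induction d as [|d IH]; simpl; [ring|]. rewrite IH. ring. Qed.

Lemma sumR_nonneg d f : (forall k, (k < d)%nat -> 0 <= f k) -> 0 <= sumR d f.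
Proof.
  induction d as [|d IH]; intros Hf; simpl; [lra|].
  assert (0 <= sumR d f) by (apply IH; intros; apply Hf; lia).
  assert (0 <= f d) by (apply Hf; lia). lra.
Qed.

Lemma sumR_single d p f :
  (p < d)%nat -> (forall k, (k < d)%nat -> k <> p -> f k = 0) -> sumR d f = f p.
Proof.
  induction d as [|d IH]; intros Hp Hf; [lia|]. simpl.
  destruct (Nat.eq_dec p d) as [->|Hne].
  - rewrite sumR_eq0 by (intros; apply Hf; lia). ring.
  - rewrite IH, (Hf d) by (try intros; try apply Hf; lia). ring.
Qed.

Lemma sumR_if_lt d i g :
  sumR d (fun k => if (k <? i)%nat then g k else 0) = sumR (Nat.min i d) g.
Proof.
  induction d as [|d IH]; simpl; [now rewrite Nat.min_0_r|].
  rewrite IH. destruct (Nat.ltb_spec d i).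
  - now replace (Nat.min i (S d)) with (S d) by lia; replace (Nat.min i d) with d by lia.
  - replace (Nat.min i (S d)) with (Nat.min i d) by lia. ring.
Qed.

Lemma sumR_if_succ_eq d i g : (1 <= i <= d)%nat ->
  sumR d (fun k => if (S k =? i)%nat then g k else 0) = g (i - 1)%nat.
Proof.
  intros Hi. rewrite (sumR_single d (i - 1)); [| lia |].
  - now replace (S (i - 1) =? i)%nat with true by (symmetry; apply Nat.eqb_eq; lia).
  - intros k _ Hk. destruct (Nat.eqb_spec (S k) i); [lia|reflexivity].
Qed.

Lemma sumR_if_succ_eq_out d i g : (i = 0 \/ d < i)%nat ->
  sumR d (fun k => if (S k =? i)%nat then g k else 0) = 0.
Proof.
  intros Hi. apply sumR_eq0. intros k Hk.
  destruct (Nat.eqb_spec (S k) i); [lia|reflexivity].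
Qed.

Definition dot (d : nat) (x y : nat -> R) : R := sumR d (fun k => x k * y k).

Definition sqdist (d : nat) (x y : nat -> R) : R := sumR d (fun k => (x k - y k) ^ 2).

Lemma edist_sqdist d x y : edist d x y = sqrt (sqdist d x y).
Proof. reflexivity. Qed.

Lemma sqdist_nonneg d x y : 0 <= sqdist d x y.
Proof. apply sumR_nonneg. intros; apply pow2_ge_0. Qed.

Lemma dot_comm d x y : dot d x y = dot d y x.
Proof. apply sumR_ext. intros; ring. Qed.

Lemma dot_sub_l d x y z : dot d (fun k => x k - y k) z = dot d x z - dot d y z.
Proof. unfold dot. rewrite <- sumR_sub. apply sumR_ext. intros; ring. Qed.

Lemma dot_sub_r d x y z : dot d x (fun k => y k - z k) = dot d x y - dot d x z.
Proof. unfold dot. rewrite <- sumR_sub. apply sumR_ext. intros; ring. Qed.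

Lemma sqdist_expand d x y : sqdist d x y = dot d x x - 2 * dot d x y + dot d y y.
Proof.
  unfold sqdist, dot. rewrite <- sumR_scal, <- sumR_sub, <- sumR_add.
  apply sumR_ext. intros; ring.
Qed.

Lemma dot_lower_triangular_eq0 d p (w : nat -> nat -> R) a :
  (p <= d)%nat ->
  (forall i k, (i < p)%nat -> (i < k)%nat -> w i k = 0) ->
  (forall i, (i < p)%nat -> w i i <> 0) ->
  (forall i, (i < p)%nat -> dot d a (w i) = 0) ->
  forall k, (k < p)%nat -> a k = 0.
Proof.
  induction p as [|p IH]; intros Hpd Hw Hdiag Hdot k Hk; [lia|].
  assert (Ha_below : forall j, (j < p)%nat -> a j = 0)
    by (apply IH; intros; try apply Hw; try apply Hdiag; try apply Hdot; lia).
  destruct (Nat.eq_dec k p) as [->|]; [|apply Ha_below; lia].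
  assert (Hp : a p * w p p = 0).
  { rewrite <- (Hdot p) by lia. symmetry.
    apply (sumR_single d p (fun j => a j * w p j)); [lia|].
    intros j _ Hj. destruct (Nat.lt_ge_cases j p).
    - rewrite Ha_below by lia. ring.
    - rewrite Hw by lia. ring. }
  apply Rmult_integral in Hp as [Hp|Hp]; [exact Hp|].
  exfalso. apply (Hdiag p); [lia|exact Hp].
Qed.

Lemma dot_upper_triangular_eq0 d q (w : nat -> nat -> R) a :
  (forall i k, (q <= i < d)%nat -> (k < i)%nat -> w i k = 0) ->
  (forall i, (q <= i < d)%nat -> w i i <> 0) ->
  (forall i, (q <= i < d)%nat -> dot d a (w i) = 0) ->
  forall k, (q <= k < d)%nat -> a k = 0.
Proof.
  remember (d - q)%nat as r eqn:Hr. revert q Hr.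
  induction r as [|r IH]; intros q Hr Hw Hdiag Hdot k Hk; [lia|].
  assert (Ha_above : forall j, (S q <= j < d)%nat -> a j = 0)
    by (apply (IH (S q)); intros; try apply Hw; try apply Hdiag; try apply Hdot; lia).
  destruct (Nat.eq_dec k q) as [->|]; [|apply Ha_above; lia].
  assert (Hq : a q * w q q = 0).
  { rewrite <- (Hdot q) by lia. symmetry.
    apply (sumR_single d q (fun j => a j * w q j)); [lia|].
    intros j Hjd Hj. destruct (Nat.lt_ge_cases j q).
    - rewrite Hw by lia. ring.
    - rewrite Ha_above by lia. ring. }
  apply Rmult_integral in Hq as [Hq|Hq]; [exact Hq|].
  exfalso. apply (Hdiag q); [lia|exact Hq].
Qed.

Definition stair_sq (i : nat) : R := sumR i (fun k => (2 ^ k) ^ 2).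

Definition bump (i : nat) : R := sqrt (stair_sq i).

(* Coordinate k of P_i; the bump of P_(m+1) lies at coordinate m, outside R^m. *)
Definition crescent_pt (i k : nat) : R :=
  (if (k <? i)%nat then 2 ^ k else 0) + (if (S k =? i)%nat then bump i else 0).

Lemma pow2_sq_stair_sq i : (2 ^ i) ^ 2 = 3 * stair_sq i + 1.
Proof.
  induction i as [|i IH]; [unfold stair_sq; simpl; ring|].
  unfold stair_sq in *; cbn [sumR]. change (2 ^ S i) with (2 * 2 ^ i).
  replace ((2 * 2 ^ i) ^ 2) with (4 * (2 ^ i) ^ 2) by ring. lra.
Qed.

Lemma stair_sq_S i : stair_sq (S i) = 4 * stair_sq i + 1.
Proof.
  unfold stair_sq at 1; cbn [sumR]; fold (stair_sq i).
  rewrite pow2_sq_stair_sq. ring.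
Qed.

Lemma stair_sq_nonneg i : 0 <= stair_sq i.
Proof. apply sumR_nonneg. intros; apply pow2_ge_0. Qed.

Lemma stair_sq_ge1 i : (1 <= i)%nat -> 1 <= stair_sq i.
Proof.
  intros Hi. destruct i as [|i]; [lia|].
  rewrite stair_sq_S. pose proof (stair_sq_nonneg i). lra.
Qed.

Lemma stair_sq_le i j : (i <= j)%nat -> stair_sq i <= stair_sq j.
Proof.
  induction 1 as [|j _ IH]; [lra|].
  rewrite stair_sq_S. pose proof (stair_sq_nonneg j). lra.
Qed.

Lemma bump_sq i : bump i ^ 2 = stair_sq i.
Proof. apply pow2_sqrt, stair_sq_nonneg. Qed.

Lemma bump_pos i : (1 <= i)%nat -> 0 < bump i.
Proof. intros Hi. apply sqrt_lt_R0. pose proof (stair_sq_ge1 i Hi). lra. Qed.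

Lemma pow2_le_bump i : 2 ^ i <= bump (S i).
Proof.
  pose proof (pow2_sq_stair_sq i). pose proof (bump_sq (S i)).
  rewrite stair_sq_S in *. pose proof (stair_sq_nonneg i).
  pose proof (pow_lt 2 i ltac:(lra)). pose proof (bump_pos (S i) ltac:(lia)). nra.
Qed.

Lemma crescent_pt_ge i k : (i <= k)%nat -> crescent_pt i k = 0.
Proof.
  intros H. unfold crescent_pt.
  destruct (Nat.ltb_spec k i), (Nat.eqb_spec (S k) i); first [lia | ring].
Qed.

Lemma crescent_pt_lt i k : (S k < i)%nat -> crescent_pt i k = 2 ^ k.
Proof.
  intros H. unfold crescent_pt.
  destruct (Nat.ltb_spec k i), (Nat.eqb_spec (S k) i); first [lia | ring].
Qed.

Lemma crescent_pt_diag i : crescent_pt (S i) i = 2 ^ i + bump (S i).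
Proof.
  unfold crescent_pt. destruct (Nat.ltb_spec i (S i)); [|lia].
  now rewrite Nat.eqb_refl.
Qed.

Lemma crescent_pt_sub_sq i j k : (i < j)%nat ->
  (crescent_pt i k - crescent_pt j k) ^ 2 =
  (if (k <? j)%nat then (2 ^ k) ^ 2 else 0) - (if (k <? i)%nat then (2 ^ k) ^ 2 else 0)
  + (if (S k =? i)%nat then stair_sq i else 0)
  + (if (S k =? j)%nat then 2 * 2 ^ k * bump j + stair_sq j else 0).
Proof.
  intros Hij. rewrite <- (bump_sq i), <- (bump_sq j). unfold crescent_pt.
  destruct (Nat.ltb_spec k i), (Nat.ltb_spec k j),
    (Nat.eqb_spec (S k) i), (Nat.eqb_spec (S k) j); first [lia | ring].
Qed.

Definition crescent_sqdist (m j : nat) : R :=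
  if (j <=? m)%nat then 2 * stair_sq j + 2 * 2 ^ (j - 1) * bump j else stair_sq m.

Lemma sqdist_crescent_pt m i j : (i < j)%nat -> (j <= S m)%nat ->
  sqdist m (crescent_pt i) (crescent_pt j) = crescent_sqdist m j.
Proof.
  intros Hij Hjm. unfold sqdist.
  rewrite (sumR_ext _ _ _ (fun k _ => crescent_pt_sub_sq i j k Hij)).
  rewrite !sumR_add, sumR_sub, !sumR_if_lt.
  replace (Nat.min i m) with i by lia. fold (stair_sq i).
  replace (sumR m (fun k => if (S k =? i)%nat then stair_sq i else 0)) with (stair_sq i).
  2:{ destruct i as [|i].
      - now rewrite sumR_if_succ_eq_out by lia.
      - now rewrite sumR_if_succ_eq by lia. }
  unfold crescent_sqdist. destruct (Nat.leb_spec j m).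
  - rewrite sumR_if_succ_eq by lia. replace (Nat.min j m) with j by lia.
    fold (stair_sq j). ring.
  - rewrite sumR_if_succ_eq_out by lia. replace (Nat.min j m) with m by lia.
    fold (stair_sq m). ring.
Qed.

Lemma crescent_sqdist_last m : crescent_sqdist m (S m) = stair_sq m.
Proof. unfold crescent_sqdist. destruct (Nat.leb_spec (S m) m); [lia|reflexivity]. Qed.

Lemma crescent_sqdist_bounds m j : (1 <= j <= m)%nat ->
  2 * stair_sq j <= crescent_sqdist m j <= 4 * stair_sq j.
Proof.
  intros Hj. unfold crescent_sqdist. destruct (Nat.leb_spec j m); [|lia].
  pose proof (pow2_le_bump (j - 1)). replace (S (j - 1)) with j in * by lia.
  pose proof (bump_sq j). pose proof (pow_lt 2 (j - 1) ltac:(lra)).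
  pose proof (bump_pos j ltac:(lia)). nra.
Qed.

Lemma crescent_sqdist_pos m j : (1 <= m)%nat -> (1 <= j <= S m)%nat ->
  0 < crescent_sqdist m j.
Proof.
  intros Hm Hj. destruct (Nat.eq_dec j (S m)) as [->|].
  - rewrite crescent_sqdist_last. pose proof (stair_sq_ge1 m Hm). lra.
  - pose proof (crescent_sqdist_bounds m j ltac:(lia)).
    pose proof (stair_sq_ge1 j ltac:(lia)). lra.
Qed.

(* For j <= m the value lies in [2 N_j, 4 N_j], and these intervals are disjoint
   since N_(j+1) = 4 N_j + 1; the last value N_m falls in the gap below level m. *)
Lemma crescent_sqdist_neq m a b : (1 <= m)%nat -> (1 <= a)%nat -> (a < b <= S m)%nat ->
  crescent_sqdist m a <> crescent_sqdist m b.
Proof.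
  intros Hm Ha Hab.
  pose proof (crescent_sqdist_bounds m a ltac:(lia)).
  pose proof (stair_sq_S a). pose proof (stair_sq_nonneg a).
  destruct (Nat.eq_dec b (S m)) as [->|].
  - rewrite crescent_sqdist_last. destruct (Nat.eq_dec a m) as [->|].
    + pose proof (stair_sq_ge1 m Hm). lra.
    + pose proof (stair_sq_le (S a) m ltac:(lia)). lra.
  - pose proof (crescent_sqdist_bounds m b ltac:(lia)).
    pose proof (stair_sq_le (S a) b ltac:(lia)). lra.
Qed.

Definition crescent_dist (m j : nat) : R := sqrt (crescent_sqdist m j).

Lemma edist_crescent_pt m i j : (i < j)%nat -> (j <= S m)%nat ->
  edist m (crescent_pt i) (crescent_pt j) = crescent_dist m j.
Proof. intros. rewrite edist_sqdist. now rewrite sqdist_crescent_pt. Qed.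

Lemma crescent_dist_pos m j : (1 <= m)%nat -> (1 <= j <= S m)%nat ->
  0 < crescent_dist m j.
Proof. intros. now apply sqrt_lt_R0, crescent_sqdist_pos. Qed.

Lemma crescent_dist_is_distance m j : (1 <= j <= S m)%nat ->
  is_distance m (S (S m)) crescent_pt (crescent_dist m j).
Proof.
  intros Hj. exists 0%nat, j. split; [lia|split; [lia|]]. apply edist_crescent_pt; lia.
Qed.

Lemma crescent_dist_inj m a b : (1 <= m)%nat -> (1 <= a <= S m)%nat -> (1 <= b <= S m)%nat ->
  crescent_dist m a = crescent_dist m b -> a = b.
Proof.
  intros Hm Ha Hb Hab. apply sqrt_inj in Hab;
    [| apply Rlt_le, crescent_sqdist_pos; auto ..].
  destruct (Nat.lt_trichotomy a b) as [Hlt|[Heq|Hlt]]; [|exact Heq|].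
  - exfalso. apply (crescent_sqdist_neq m a b); auto; lia.
  - exfalso. apply (crescent_sqdist_neq m b a); auto; lia.
Qed.

Lemma NoDup_bounded_length n L :
  NoDup L -> (forall x, In x L -> (x < n)%nat) -> (length L <= n)%nat.
Proof.
  intros HL Hbound. rewrite <- (length_seq n 0). apply NoDup_incl_length; [exact HL|].
  intros x Hx. apply in_seq. specialize (Hbound x Hx). lia.
Qed.

Lemma index_subset_full n L : index_subset n n L -> forall i, (i < n)%nat -> In i L.
Proof.
  intros (HND & Hlen & Hbound) i Hi. rewrite Forall_forall in Hbound.
  destruct (in_dec Nat.eq_dec i L) as [|Hnin]; [assumption|exfalso].
  assert (length (i :: L) <= n)%nat; [|simpl in *; lia].
  apply NoDup_bounded_length; [now constructor|].
  intros x [<-|Hx]; auto.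
Qed.

Lemma index_subset_all_but_one n L : index_subset (S n) n L ->
  exists l, (l < S n)%nat /\ forall i, (i < S n)%nat -> i <> l -> In i L.
Proof.
  intros (HND & Hlen & Hbound). rewrite Forall_forall in Hbound.
  destruct (Forall_dec (fun i => In i L) (fun i => in_dec Nat.eq_dec i L) (seq 0 (S n)))
    as [Hall|Hmiss].
  - exfalso. rewrite Forall_forall in Hall.
    pose proof (NoDup_incl_length (seq_NoDup (S n) 0) Hall). rewrite length_seq in *. lia.
  - apply neg_Forall_Exists_neg in Hmiss; [|intros; apply in_dec, Nat.eq_dec].
    apply Exists_exists in Hmiss as (l & Hl & Hnl). apply in_seq in Hl.
    exists l. split; [lia|]. intros i Hi Hil.
    destruct (in_dec Nat.eq_dec i L) as [|Hni]; [assumption|exfalso].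
    assert (length (l :: i :: L) <= S n)%nat; [|simpl in *; lia].
    apply NoDup_bounded_length.
    + constructor; [intros [Hli|Hli]; congruence|now constructor].
    + intros x [<-|[<-|Hx]]; auto; lia.
Qed.

Lemma crescent_pt_distinct m : (1 <= m)%nat -> distinct_pts m (S (S m)) crescent_pt.
Proof.
  intros Hm.
  assert (Hlt : forall i j, (i < j < S (S m))%nat ->
    ~ pt_eq m (crescent_pt i) (crescent_pt j)).
  { intros i j Hij Heq.
    assert (Hzero : edist m (crescent_pt i) (crescent_pt j) = 0).
    { rewrite edist_sqdist, <- sqrt_0. f_equal. apply sumR_eq0.
      intros k Hk. rewrite (Heq k Hk). ring. }
    rewrite edist_crescent_pt in Hzero by lia.
    pose proof (crescent_dist_pos m j Hm ltac:(lia)). lra. }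
  intros i j Hi Hj Hij Heq. destruct (Nat.lt_gt_cases i j) as [[|] _]; [exact Hij| |].
  - now apply (Hlt i j); [lia|].
  - apply (Hlt j i); [lia|]. intros k Hk. symmetry. now apply Heq.
Qed.

Lemma dot_crescent_pt_0 m y : dot m (crescent_pt 0) y = 0.
Proof. apply sumR_eq0. intros k _. rewrite crescent_pt_ge by lia. ring. Qed.

Lemma crescent_pt_no_hyperplane m L : index_subset (S (S m)) (m + 1) L ->
  ~ on_common_hyperplane m crescent_pt L.
Proof.
  intros HL (a & b & (k0 & Hk0 & Ha0) & Hon).
  rewrite Nat.add_1_r in HL.
  destruct (index_subset_all_but_one _ _ HL) as (l & Hl & HinL).
  rewrite Forall_forall in Hon.
  assert (Hdot : forall i, (i < S (S m))%nat -> i <> l -> dot m a (crescent_pt i) = b)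
    by (intros; apply Hon, HinL; assumption).
  assert (Hb : l <> 0%nat -> b = 0).
  { intros Hl0. rewrite <- (Hdot 0%nat) by lia. rewrite dot_comm. apply dot_crescent_pt_0. }
  assert (Hbelow : forall k, (k < l - 1)%nat -> a k = 0).
  { apply (dot_lower_triangular_eq0 m (l - 1) (fun i => crescent_pt (S i))); [lia| | |].
    - intros i j _ Hij. apply crescent_pt_ge. lia.
    - intros i _. rewrite crescent_pt_diag.
      pose proof (pow_lt 2 i ltac:(lra)). pose proof (bump_pos (S i) ltac:(lia)). lra.
    - intros i Hi. rewrite Hdot by lia. apply Hb. lia. }
  assert (Habove : forall k, (l <= k < m)%nat -> a k = 0).
  { apply (dot_upper_triangular_eq0 m l
      (fun i k => crescent_pt (S m) k - crescent_pt (S i) k)).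
    - intros i k Hi Hk. rewrite !crescent_pt_lt by lia. ring.
    - intros i Hi. rewrite crescent_pt_lt, crescent_pt_diag by lia.
      pose proof (bump_pos (S i) ltac:(lia)). lra.
    - intros i Hi. rewrite dot_sub_r, !Hdot by lia. ring. }
  apply Ha0. destruct (Nat.lt_ge_cases k0 (l - 1)) as [|Hk0l]; [now apply Hbelow|].
  destruct (Nat.le_gt_cases l k0); [apply Habove; lia|].
  replace k0 with (l - 1)%nat in * by lia.
  assert (Hlast : a (l - 1)%nat * 2 ^ (l - 1) = 0).
  { rewrite <- (Hb ltac:(lia)), <- (Hdot (S m)) by lia. symmetry.
    unfold dot. rewrite (sumR_single m (l - 1) (fun j => a j * crescent_pt (S m) j)).
    - now rewrite crescent_pt_lt by lia.
    - lia.
    - intros j Hj Hjl. destruct (Nat.lt_ge_cases j (l - 1)).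
      + rewrite Hbelow by lia. ring.
      + rewrite Habove by lia. ring. }
  apply Rmult_integral in Hlast as [|Hpow]; [assumption|].
  exfalso. pose proof (pow_lt 2 (l - 1) ltac:(lra)). lra.
Qed.

Lemma crescent_pt_no_hypersphere m L : index_subset (S (S m)) (m + 2) L ->
  ~ on_common_hypersphere m crescent_pt L.
Proof.
  intros HL (c & r & Hr & Hon).
  rewrite Nat.add_comm in HL. pose proof (index_subset_full _ _ HL) as HinL.
  rewrite Forall_forall in Hon.
  set (Q := crescent_pt (S m)).
  assert (Hsq : forall i, (i < S (S m))%nat -> sqdist m (crescent_pt i) c = r ^ 2).
  { intros i Hi. rewrite <- (Hon i (HinL i Hi)), edist_sqdist.
    symmetry. apply pow2_sqrt, sqdist_nonneg. }
  (* c and Q are both equidistant from P_0, ..., P_m,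
     so c - Q is orthogonal to P_1, ..., P_m. *)
  assert (Horth : forall i, (i < m)%nat ->
    dot m (fun k => c k - Q k) (crescent_pt (S i)) = 0).
  { intros i Hi.
    pose proof (Hsq (S i) ltac:(lia)) as Hc_i. pose proof (Hsq 0%nat ltac:(lia)) as Hc_0.
    pose proof (sqdist_crescent_pt m (S i) (S m) ltac:(lia) ltac:(lia)) as HQ_i.
    pose proof (sqdist_crescent_pt m 0 (S m) ltac:(lia) ltac:(lia)) as HQ_0.
    rewrite !sqdist_expand, !dot_crescent_pt_0 in *.
    rewrite dot_sub_l, (dot_comm m c), (dot_comm m Q). fold Q in HQ_i, HQ_0. lra. }
  assert (HcQ : forall k, (k < m)%nat -> c k - Q k = 0).
  { apply (dot_lower_triangular_eq0 m m (fun i => crescent_pt (S i))); [lia| | |exact Horth].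
    - intros i j _ Hij. apply crescent_pt_ge. lia.
    - intros i _. rewrite crescent_pt_diag.
      pose proof (pow_lt 2 i ltac:(lra)). pose proof (bump_pos (S i) ltac:(lia)). lra. }
  assert (HQc : sqdist m Q c = 0).
  { apply sumR_eq0. intros k Hk. replace (Q k - c k) with (- (c k - Q k)) by ring.
    rewrite HcQ by exact Hk. ring. }
  pose proof (Hsq (S m) ltac:(lia)) as HrQ. fold Q in HrQ. nra.
Qed.

Lemma in_pairs n a b : In (a, b) (pairs n) -> (a < b < n)%nat.
Proof.
  unfold pairs. intros Hab. apply in_flat_map in Hab as (x & Hx & Hy).
  apply in_map_iff in Hy as (y & Hy & Hy'). inversion Hy; subst.
  apply in_seq in Hx. apply in_seq in Hy'. lia.
Qed.

Lemma length_filter_eqb_seq j a len :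
  length (filter (fun y => (y =? j)%nat) (seq a len))
  = (Nat.min (a + len) (S j) - Nat.max a j)%nat.
Proof.
  revert a; induction len as [|len IH]; intros a; simpl; [lia|].
  destruct (Nat.eqb_spec a j); simpl; rewrite IH; lia.
Qed.

Lemma length_filter_snd_eqb_map (x j : nat) s :
  length (filter (fun ij : nat * nat => (snd ij =? j)%nat) (map (fun y => (x, y)) s))
  = length (filter (fun y => (y =? j)%nat) s).
Proof.
  induction s as [|y s IH]; simpl; [reflexivity|]. destruct (y =? j)%nat; simpl; auto.
Qed.

Lemma length_filter_snd_eqb_blocks n j a len : (j < n)%nat ->
  length (filter (fun ij : nat * nat => (snd ij =? j)%nat)
    (flat_map (fun i => map (fun y => (i, y)) (seq (S i) (n - S i))) (seq a len)))
  = (Nat.min (a + len) j - a)%nat.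
Proof.
  intros Hj. revert a; induction len as [|len IH]; intros a; simpl; [lia|].
  rewrite filter_app, length_app, length_filter_snd_eqb_map, length_filter_eqb_seq, IH.
  lia.
Qed.

Lemma length_filter_snd_eqb_pairs n j : (j < n)%nat ->
  length (filter (fun ij : nat * nat => (snd ij =? j)%nat) (pairs n)) = j.
Proof. intros Hj. unfold pairs. rewrite length_filter_snd_eqb_blocks by exact Hj. lia. Qed.

Lemma crescent_pt_mult m j : (1 <= m)%nat -> (1 <= j <= S m)%nat ->
  mult m (S (S m)) crescent_pt (crescent_dist m j) = j.
Proof.
  intros Hm Hj. unfold mult.
  rewrite (filter_ext_in _ (fun ij : nat * nat => (snd ij =? j)%nat)).
  - apply length_filter_snd_eqb_pairs. lia.
  - intros [a b] Hab. apply in_pairs in Hab. simpl.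
    rewrite edist_crescent_pt by lia. unfold Reqb.
    destruct (Req_EM_T (crescent_dist m b) (crescent_dist m j)) as [Hbj|Hbj];
      destruct (Nat.eqb_spec b j) as [->|Hne]; try reflexivity.
    + exfalso. apply Hne. apply (crescent_dist_inj m); auto; lia.
    + contradiction.
Qed.

Lemma crescent_pt_distances m : (1 <= m)%nat ->
  exists V : list R, NoDup V /\ length V = S m /\
    (forall v, In v V <-> is_distance m (S (S m)) crescent_pt v).
Proof.
  intros Hm. exists (map (crescent_dist m) (seq 1 (S m))). split; [|split].
  - apply NoDup_map_NoDup_ForallPairs; [|apply seq_NoDup].
    intros a b Ha Hb. apply in_seq in Ha, Hb. apply crescent_dist_inj; auto; lia.
  - now rewrite length_map, length_seq.
  - intros v. rewrite in_map_iff. split.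
    + intros (j & <- & Hj). apply in_seq in Hj. apply crescent_dist_is_distance. lia.
    + intros (i & j & Hij & Hj & <-). exists j.
      rewrite edist_crescent_pt by lia. split; [reflexivity|]. apply in_seq. lia.
Qed.

Theorem theorem1p1 :
  forall n : nat, (3 <= n)%nat ->
  exists P : nat -> nat -> R, crescent (n - 2) n P.
Proof.
  intros n Hn. destruct n as [|[|m]]; [lia|lia|].
  replace (S (S m) - 2)%nat with m by lia.
  assert (Hm : (1 <= m)%nat) by lia.
  exists crescent_pt. split; [split; [|split]|split].
  - now apply crescent_pt_distinct.
  - intros L HL. now apply crescent_pt_no_hyperplane.
  - intros L HL. now apply crescent_pt_no_hypersphere.
  - replace (S (S m) - 1)%nat with (S m) by lia. now apply crescent_pt_distances.
  - intros j Hj. exists (crescent_dist m j). split.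
    + apply crescent_dist_is_distance. lia.
    + apply crescent_pt_mult; lia.
Qed.
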